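(* Let $X=\{x_1,\dots,x_n\}\subseteq\mathbb{R}^d$ be a finite set of base points, let $\delta(\cdot,\cdot)$ be the distance function, and let $G=(V,E)$ be a directed graph index whose vertex set $V$ is identified with $X$. Let $q\in\mathbb{R}^d$ be a query and, for $1\le i\le n$, let $N_{i,q}$ denote the $i$-th nearest neighbour of $q$ in $X$ (so $\delta(N_{1,q},q)\le\delta(N_{2,q},q)\le\cdots$). Let $S\ge 1$ and $1\le i,j\le S$. If $N_{i,q}$ can reach $N_{j,q}$ (via a directed path) in the $S$-Neighboring Graph $NG_{S,q}$, then the Greedy Search algorithm run with query $q$, entry point $ep=N_{i,q}$ and search list size $L\ge S$ (and any result size $k\le L$) always visits (marks as visited) $N_{j,q}$.
   Context: $S$-Neighboring Graph: for a directed graph $G=(V,E)$ and query $q$, let $V_{S,q}=\{N_{1,q},\dots,N_{S,q}\}$; then $NG_{S,q}=(V_{S,q},E_{S,q})$ is the subgraph of $G$ induced by $V_{S,q}$. $Neighbors(G,u)$ denotes the set of out-neighbours of $u$ in $G$. Greedy Search (input: graph $G$, query $q$, result size $k$, entry point $ep$, search list size $L\ge k$): initialize a candidate set $C\leftarrow\{ep\}$ and a result set $R\leftarrow\{ep\}$, and mark $ep$ as visited. While $C\neq\emptyset$: pop from $C$ an element $u$ minimizing $\delta(u,q)$; set $d_{max}\leftarrow\max_{x\in R}\delta(x,q)$ (or $+\infty$ if $R=\emptyset$); if $\delta(u,q)>d_{max}$, stop the loop. Otherwise, for each $v\in Neighbors(G,u)$ that has not been visited: mark $v$ as visited; if $\delta(v,q)<d_{max}$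 or $|R|<L$, add $v$ to both $R$ and $C$; while $|R|>L$, remove from $R$ an element $x$ maximizing $\delta(x,q)$; then update $d_{max}\leftarrow\max_{x\in R}\delta(x,q)$. Finally return the $k$ points of $R$ closest to $q$. (Removing an element from $R$ does not remove it from $C$.) *)

From HB Require Import structures.
From mathcomp Require Import all_boot all_order all_algebra.
Set Implicit Arguments. Unset Strict Implicit. Unset Printing Implicit Defensive.
Import Order.TTheory GRing.Theory Num.Theory.
Local Open Scope ring_scope.

(* The graph index G = (V, E) is given by adjacency lists [nbrs : V -> seq V]:
   Neighbors(G,u) = the elements of [nbrs u]; the list order is the (arbitrary)
   order in which the for-loop of Greedy Search iterates over Neighbors(G,u).
   [dq v] is delta(v, q). *)

Section Greedy.
Variables (R : realFieldType) (V : finType) (dq : V -> R) (nbrs : V -> seq V) (L : nat).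

Definition argmin_in (A : {set V}) : option V :=
  [pick x in A | [forall y in A, dq x <= dq y]].
Definition argmax_in (A : {set V}) : option V :=
  [pick x in A | [forall y in A, dq y <= dq x]].

(* d_max = max_{x in A} delta(x,q); None encodes +infinity (A empty) *)
Definition dmax (A : {set V}) : option R := omap dq (argmax_in A).
Definition lt_opt (x : R) (m : option R) : bool :=
  if m is Some m' then x < m' else true.
Definition gt_opt (x : R) (m : option R) : bool :=
  if m is Some m' then m' < x else false.

(* "while |R| > L, remove from R an element maximizing delta(x,q)";
   #|V| iterations suffice since each removal decreases |R|. *)
Definition trim (A : {set V}) : {set V} :=
  iter #|V| (fun B : {set V} => if (L < #|B|)%N then
                        (if argmax_in B is Some x then B :\ x else B)
                      else B) A.

Record state := St { cand : {set V}; res : {set V}; visited : {set V} }.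

Definition process_nbr (s : state) (v : V) : state :=
  if v \in visited s then s else
  let vis := v |: visited s in
  if lt_opt (dq v) (dmax (res s)) || (#|res s| < L)%N then
    St (v |: cand s) (trim (v |: res s)) vis
  else St (cand s) (res s) vis.

Fixpoint gs_loop (fuel : nat) (s : state) : state :=
  match fuel with
  | 0 => s
  | f.+1 =>
    match argmin_in (cand s) with
    | None => s
    | Some u =>
      let s1 := St (cand s :\ u) (res s) (visited s) in
      if gt_opt (dq u) (dmax (res s)) then s1
      else gs_loop f (foldl process_nbr s1 (nbrs u))
    end
  end.

(* Greedy Search from entry point ep; the loop runs at most #|V| iterations
   (each vertex enters C at most once), so fuel #|V|.+1 never runs out. *)
Definition greedy_search (ep : V) : state :=
  gs_loop #|V|.+1 (St [set ep] [set ep] [set ep]).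

End Greedy.

(* V_{S,q} = {N_1, ..., N_S} (0-based indices a < S) *)
Definition VS (V : finType) (n : nat) (N : 'I_n -> V) (S : nat) : {set V} :=
  [set N a | a : 'I_n & (a < S)%N].

Definition NG_rel (V : finType) (nbrs : V -> seq V) (A : {set V}) : rel V :=
  [rel u v | [&& u \in A, v \in A & v \in nbrs u]].

From HB Require Import structures.
From mathcomp Require Import all_boot all_order all_algebra.
From mathcomp Require Import zify.
Import Order.TTheory GRing.Theory Num.Theory.
Local Open Scope ring_scope.

(* Let A = V_{S,q}: at most S <= L points, each strictly closer to q than any
   point outside A.  Two facts make Greedy Search unable to lose a point of A.
   First, a point of A that is still in C is never evicted from R: an eviction
   happens only when |R| > L >= |A|, so the farthest point of R lies outside A.
   Second, an unvisited point v of A met as a neighbour is always admitted: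
   either |R| < L, or |R| >= |A| while v is not in R, so R contains a point
   outside A, which is farther than v.  Consequently the loop cannot stop while
   a point of A is in C (it would be within d_max), so at termination every
   visited point of A has had all its neighbours visited.  The visited set is
   then closed under the edges of NG_{S,q} and contains the entry point. *)

Set Implicit Arguments. Unset Strict Implicit. Unset Printing Implicit Defensive.

Lemma foldl_ind (T U : Type) (f : T -> U -> T) (P : T -> Prop) :
  (forall s v, P s -> P (f s v)) -> forall l s, P s -> P (foldl f s l).
Proof. by move=> Pf; elim=> [|v l IH] s Ps //=; apply/IH/Pf. Qed.

Lemma card_lt_exists_notin (T : finType) (A B : {set T}) :
  (#|A| < #|B|)%N -> exists2 y, y \in B & y \notin A.
Proof.
by move=> ltAB; apply/subsetPn; apply: contraTN ltAB => /subset_leq_card; rewrite -leqNgt.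
Qed.

Section Extrema.
Variables (R : realFieldType) (V : finType) (dq : V -> R).

Lemma argmin_in_Some (B : {set V}) u : argmin_in dq B = Some u ->
  u \in B /\ {in B, forall y, dq u <= dq y}.
Proof. by rewrite /argmin_in; case: pickP => // x /andP[xB /forall_inP xmin] [<-]. Qed.

Lemma argmin_in_None (B : {set V}) : argmin_in dq B = None -> B = set0.
Proof.
rewrite /argmin_in; case: pickP => // noMin _; apply/setP => y; rewrite inE.
apply/negP => yB; case: (Order.TotalTheory.arg_minP dq yB) => m mB mmin.
by case/negP: (noMin m); apply/andP; split; last apply/forall_inP.
Qed.

Lemma dmax_nonempty (B : {set V}) w : w \in B ->
  exists2 m, dmax dq B = Some (dq m) & {in B, forall y, dq y <= dq m}.
Proof.
move=> wB; rewrite /dmax /argmax_in.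
case: pickP => [m /andP[_ /forall_inP mmax] | noMax]; first by exists m.
case: (arg_maxP dq wB) => m mB mmax.
by case/negP: (noMax m); apply/andP; split; last apply/forall_inP.
Qed.

End Extrema.

Section NearestPrefix.
Variables (R : realFieldType) (V : finType) (dq : V -> R) (nbrs : V -> seq V).
Variables (L : nat) (A : {set V}).
Hypothesis A_nearest : forall x y, x \in A -> y \notin A -> dq x < dq y.
Hypothesis A_small : (#|A| <= L)%N.

Lemma farthest_notin (B : {set V}) x : (L < #|B|)%N ->
  {in B, forall y, dq y <= dq x} -> x \notin A.
Proof.
move=> ltLB xmax; apply/negP => xA.
have [y yB yA] := card_lt_exists_notin (leq_ltn_trans A_small ltLB).
by have := A_nearest xA yA; rewrite ltNge xmax.
Qed.

Definition trim_step (B : {set V}) : {set V} :=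
  if (L < #|B|)%N then (if argmax_in dq B is Some x then B :\ x else B) else B.

Lemma trim_step_subset B : trim_step B \subset B.
Proof.
by rewrite /trim_step; case: ifP => // _; case: argmax_in => // x; apply: subD1set.
Qed.

Lemma trim_step_keeps B : A :&: B \subset trim_step B.
Proof.
rewrite /trim_step /argmax_in; case: ifP => [ltLB|_]; last exact: subsetIr.
case: pickP => [x /andP[_ /forall_inP xmax] | _]; last exact: subsetIr.
apply/subsetP => w /setIP[wA wB]; rewrite in_setD1 wB andbT.
by apply: contraTneq wA => ->; apply: farthest_notin ltLB xmax.
Qed.

Lemma trimE B : trim dq L B = iter #|V| trim_step B.
Proof. by []. Qed.

Lemma trim_subset B : trim dq L B \subset B.
Proof.
by rewrite trimE; elim: #|V| => //= k IH; apply: subset_trans (trim_step_subset _) IH.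
Qed.

Lemma trim_keeps B : A :&: B \subset trim dq L B.
Proof.
rewrite trimE; elim: #|V| => /= [|k IH]; first exact: subsetIr.
by apply: subset_trans (trim_step_keeps _); rewrite subsetI subsetIl.
Qed.

Local Notation process := (process_nbr dq L).

Definition search_inv (s : state V) :=
  (res s \subset visited s) && (A :&: cand s \subset res s).

(* [ex] is the vertex whose neighbours are being processed, if any. *)
Definition pending_or_expanded (ex : pred V) (s : state V) :=
  {in A, forall w, w \in visited s ->
    [\/ ex w, w \in cand s | {subset nbrs w <= visited s}]}.

Definition expanded_closed (s : state V) :=
  {in A, forall w, w \in visited s -> {subset nbrs w <= visited s}}.

Definition potential (s : state V) := (#|cand s| + #|~: visited s|)%N.

Lemma visited_process_nbr s v : visited (process s v) = v |: visited s.
Proof.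
rewrite /process_nbr; case: ifP => [vV | _]; last by case: ifP.
by apply/esym/setUidPr; rewrite sub1set.
Qed.

Lemma cand_process_nbr s v : cand s \subset cand (process s v).
Proof.
by rewrite /process_nbr; case: ifP => // _; case: ifP => //= _; apply: subsetUr.
Qed.

Lemma potential_process_nbr s v : (potential (process s v) <= potential s)%N.
Proof.
rewrite /potential visited_process_nbr /process_nbr; case: ifP => [vV | vV].
  by rewrite (setUidPr _) // sub1set.
have := cardsC (v |: visited s); have := cardsC (visited s).
by rewrite cardsU1 vV; case: ifP => _ /=; rewrite ?cardsU1; lia.
Qed.

Lemma admits_unvisited s v : search_inv s -> v \in A -> v \notin visited s ->
  lt_opt (dq v) (dmax dq (res s)) || (#|res s| < L)%N.
Proof.
case/andP=> resV _ vA vV; case: (leqP L #|res s|) => [geL | _]; last by rewrite orbT.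
have vR : v \notin res s := contra (subsetP resV v) vV.
have ltA : (#|A| < #|v |: res s|)%N.
  by rewrite cardsU1 vR add1n ltnS (leq_trans A_small geL).
have [y] := card_lt_exists_notin ltA; rewrite in_setU1 => /predU1P[-> | yR yA].
  by rewrite vA.
have [m -> mmax] := dmax_nonempty dq yR.
by rewrite orbF /= (lt_le_trans (A_nearest vA yA) (mmax _ yR)).
Qed.

Lemma search_inv_process_nbr s v : search_inv s -> search_inv (process s v).
Proof.
move=> inv; rewrite /process_nbr; case: ifP => // _; case/andP: inv => resV candR.
case: ifP => _; apply/andP; split => //=.
- by apply: subset_trans (trim_subset _) _; apply: setUS.
- apply: subset_trans (trim_keeps _); rewrite !setIUr; apply: setUS.
  by rewrite subsetI subsetIl.
- by apply: subset_trans resV _; apply: subsetUr.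
Qed.

Lemma process_nbr_admits s v : search_inv s -> v \in A -> v \notin visited s ->
  v \in cand (process s v).
Proof.
move=> inv vA vV; rewrite /process_nbr (negbTE vV).
by rewrite (admits_unvisited inv vA vV) /= setU11.
Qed.

Lemma pending_process_nbr ex s v : search_inv s ->
  pending_or_expanded ex s -> pending_or_expanded ex (process s v).
Proof.
move=> inv pend w wA; case: (boolP (v \in visited s)) => [vV | vV].
  have -> : process s v = s by rewrite /process_nbr vV.
  exact: pend.
rewrite visited_process_nbr in_setU1.
case/predU1P=> [wv | wV]; first by subst w; apply: Or32; apply: process_nbr_admits.
case: (pend w wA wV) => [exw | wC | nbrsV]; first exact: Or31.
  by apply: Or32; apply: (subsetP (cand_process_nbr s v)).
by apply: Or33 => y /nbrsV yV; rewrite in_setU1 yV orbT.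
Qed.

Lemma visited_foldl_process_nbr s l :
  visited s \subset visited (foldl process s l) /\
  {subset l <= visited (foldl process s l)}.
Proof.
elim: l s => [|v l IH] s /=; first by split.
have [sub lV] := IH (process s v); rewrite visited_process_nbr in sub.
split; first exact: subset_trans (subsetUr _ _) sub.
by move=> y /predU1P[-> | /lV //]; apply: (subsetP sub); rewrite setU11.
Qed.

Lemma potential_foldl_process_nbr s l : (potential (foldl process s l) <= potential s)%N.
Proof.
apply: (foldl_ind (P := fun t => potential t <= potential s)%N) => // t v.
exact/leq_trans/potential_process_nbr.
Qed.

Definition pop (s : state V) (u : V) := St (cand s :\ u) (res s) (visited s).

Lemma search_inv_pop s u : search_inv s -> search_inv (pop s u).
Proof.
by case/andP=> resV candR; rewrite /search_inv /= resV (subset_trans _ candR) // setIS // subD1set.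
Qed.

Lemma pending_pop s u :
  pending_or_expanded pred0 s -> pending_or_expanded (pred1 u) (pop s u).
Proof.
move=> pend w wA wV; case: (pend w wA wV) => // [wC | nbrsV]; last exact: Or33.
case: (eqVneq w u) => [-> | wu]; first by apply: Or31; rewrite /= eqxx.
by apply: Or32; rewrite /= in_setD1 wu.
Qed.

Lemma potential_pop s u : u \in cand s -> (potential (pop s u) < potential s)%N.
Proof. by move=> uC; rewrite /potential /= (cardsD1 u (cand s)) uC. Qed.

Lemma pending_expand u s : pending_or_expanded (pred1 u) s ->
  {subset nbrs u <= visited s} -> pending_or_expanded pred0 s.
Proof.
move=> pend uV w wA wV.
by case: (pend w wA wV) => [/eqP -> | wC | nbrsV]; [apply: Or33 | apply: Or32 | apply: Or33].
Qed.

Lemma closed_of_no_pending s : pending_or_expanded pred0 s ->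
  A :&: cand s = set0 -> expanded_closed s.
Proof.
move=> pend noA w wA wV; case: (pend w wA wV) => // wC.
have : w \in A :&: cand s by rewrite inE wA.
by rewrite noA inE.
Qed.

Lemma early_stop_no_pending s u : search_inv s -> argmin_in dq (cand s) = Some u ->
  gt_opt (dq u) (dmax dq (res s)) -> A :&: cand s = set0.
Proof.
case/andP=> _ candR /argmin_in_Some[_ umin] stop; apply/setP => w.
rewrite in_set0; apply: negbTE; apply/negP => wAC.
have wR := subsetP candR w wAC; case/setIP: wAC => _ wC.
have [m dm mmax] := dmax_nonempty dq wR.
by move: stop; rewrite dm /= ltNge (le_trans (umin w wC) (mmax w wR)).
Qed.

Lemma gs_loop_closed f s : search_inv s -> pending_or_expanded pred0 s ->
  (potential s < f)%N ->
  visited s \subset visited (gs_loop dq nbrs L f s) /\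
  expanded_closed (gs_loop dq nbrs L f s).
Proof.
elim: f s => [//|f IH] s inv pend lt_f /=.
case e: (argmin_in dq (cand s)) => [u|]; last first.
  by split=> //; apply: closed_of_no_pending pend _; rewrite (argmin_in_None e) setI0.
case: ifP => stop.
  by split=> //; apply: closed_of_no_pending pend (early_stop_no_pending inv e stop).
have [uC _] := argmin_in_Some e.
rewrite -/(pop s u); set s' := foldl _ _ _.
have [inv' pend'] : search_inv s' /\ pending_or_expanded (pred1 u) s'.
  apply: (foldl_ind (P := fun t => search_inv t /\ pending_or_expanded (pred1 u) t)).
    move=> t v [invt pendt].
    by split; [apply: search_inv_process_nbr | apply: pending_process_nbr].
  by split; [apply: search_inv_pop | apply: pending_pop].
have [popV uV] := visited_foldl_process_nbr (pop s u) (nbrs u).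
have lt_f' : (potential s' < f)%N.
  by apply: leq_ltn_trans (potential_foldl_process_nbr _ _) (leq_trans (potential_pop uC) _).
have [sub cl] := IH s' inv' (pending_expand pend' uV) lt_f'.
by split=> //; apply: subset_trans popV sub.
Qed.

Lemma expanded_closed_connect s x y : expanded_closed s -> x \in A ->
  x \in visited s -> connect (NG_rel nbrs A) x y -> y \in visited s.
Proof.
move=> cl xA xV /connectP[p + ->]; elim: p x xA xV => //= z p IH x xA xV.
by case/andP=> /and3P[_ zA xz] /IH; apply=> //; apply: cl xz.
Qed.

Theorem greedy_search_visits_reachable ep t : ep \in A ->
  connect (NG_rel nbrs A) ep t -> t \in visited (greedy_search dq nbrs L ep).
Proof.
move=> epA reach_t; set s0 := St [set ep] [set ep] [set ep].
have inv0 : search_inv s0 by rewrite /search_inv /= subxx subsetIr.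
have pend0 : pending_or_expanded pred0 s0 by move=> w _ /= wV; apply: Or32.
have pot0 : (potential s0 < #|V|.+1)%N.
  by rewrite /potential /= cards1 add1n ltnS -(cardsC [set ep]) cards1.
have [sub cl] := gs_loop_closed inv0 pend0 pot0.
by apply: expanded_closed_connect cl epA _ reach_t; apply: (subsetP sub); rewrite /= set11.
Qed.

End NearestPrefix.

Lemma card_VS (V : finType) n (N : 'I_n -> V) S : (#|VS N S| <= S)%N.
Proof.
apply: leq_trans (leq_imset_card _ _) _.
rewrite cardE -(size_map val) -[S in (_ <= S)%N](size_iota 0).
apply: uniq_leq_size; first by rewrite (map_inj_uniq val_inj) enum_uniq.
by move=> a /mapP[b]; rewrite mem_enum inE => bS ->; rewrite mem_iota.
Qed.

Lemma VS_nearest (R : realFieldType) (V : finType) (dq : V -> R) n (N : 'I_n -> V) S :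
  injective dq -> bijective N ->
  (forall a b : 'I_n, (a <= b)%N -> dq (N a) <= dq (N b)) ->
  forall x y, x \in VS N S -> y \notin VS N S -> dq x < dq y.
Proof.
move=> dq_inj [g _ gK] N_sorted x y /imsetP[a]; rewrite inE => aS -> yS.
have gyS : (S <= g y)%N.
  by rewrite leqNgt; apply: contra yS => gyS; rewrite -(gK y) imset_f // inE.
have le_ay : dq (N a) <= dq y.
  by rewrite -(gK y) N_sorted // (leq_trans (ltnW aS) gyS).
rewrite lt_neqAle le_ay andbT (inj_eq dq_inj).
by apply: contraNneq yS => <-; rewrite imset_f // inE.
Qed.

Theorem theorem4p2 (R : realFieldType) (d n : nat)
  (delta : 'rV[R]_d -> 'rV[R]_d -> R)
  (V : finType) (x : V -> 'rV[R]_d) (nbrs : V -> seq V) (q : 'rV[R]_d)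
  (N : 'I_n -> V) (S k L : nat) (i j : 'I_n) :
  injective x ->
  injective (fun v => delta (x v) q) ->
  bijective N ->
  (forall a b : 'I_n, (a <= b)%N -> delta (x (N a)) q <= delta (x (N b)) q) ->
  (1 <= S <= n)%N -> (i < S)%N -> (j < S)%N ->
  (S <= L)%N -> (1 <= k <= L)%N ->
  connect (NG_rel nbrs (VS N S)) (N i) (N j) ->
  N j \in visited (greedy_search (fun v => delta (x v) q) nbrs L (N i)).
Proof.
move=> _ dq_inj N_bij N_sorted _ iS _ SL _ reach.
apply: greedy_search_visits_reachable reach.
- exact: VS_nearest dq_inj N_bij N_sorted.
- exact: leq_trans (card_VS N S) SL.
- by rewrite imset_f // inE.
Qed.
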